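(* Let $\mathbb F$ have characteristic $0$, let $d\ge0$, $M=\{\mathbf a\in\mathbb N^n:|\mathbf a|_1\le d\}$, let $B\subseteq M$ be nonempty and $A=\textsc{Find}(B,n)$. Then $A\subseteq M$, $|A|=|B|$, and the submatrix $T_{A,B}$ of $T$ is nonsingular.
   Context: $T$ is the matrix with rows and columns indexed by $M$ and entries $T_{\mathbf a,\mathbf b}=\binom{\mathbf b}{\mathbf a}:=\prod_{i=1}^n\binom{b_i}{a_i}$ (with $\binom{b}{a}=0$ if $a>b$); $T_{A,B}$ is its restriction to rows $A$ and columns $B$. The procedure $\textsc{Find}(B,n)$ for finite nonempty $B\subseteq\mathbb N^n$: if $n=1$, return $\{0,\dots,|B|-1\}$; otherwise let $\pi_n$ project onto the first $n-1$ coordinates, $\ell=\max_{\mathbf u\in\pi_n(B)}|\pi_n^{-1}(\mathbf u)\cap B|$, $F_i=\{\mathbf u\in\pi_n(B):|\pi_n^{-1}(\mathbf u)\cap B|\ge i\}$ for $i\in[\ell]$, $S_i=\textsc{Find}(F_i,n-1)$, and return $\bigcup_{i=1}^\ell S_i\times\{i-1\}$. *)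

From HB Require Import structures.
From mathcomp Require Import all_boot all_order all_algebra.
Set Implicit Arguments. Unset Strict Implicit. Unset Printing Implicit Defensive.
Import GRing.Theory.

(* Points of N^n are represented as lists of naturals of length n;
   finite subsets of N^n as duplicate-free lists of such points. *)

Definition inM (n d : nat) (a : seq nat) : bool := (size a == n) && (sumn a <= d).

Definition binomv (a b : seq nat) : nat := \prod_(p <- zip a b) 'C(p.2, p.1).

(* The procedure Find(B, n). pi_n = take (n-1).  Find is only meaningful
   for n >= 1; the n = 0 branch is an arbitrary placeholder. *)
Fixpoint Find (n : nat) (B : seq (seq nat)) {struct n} : seq (seq nat) :=
  match n with
  | 0 => [::]
  | 1 => [seq [:: i] | i <- iota 0 (size (undup B))]
  | S ((S _) as m) =>
      let P := undup [seq take m b | b <- B] in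
      let cnt u := count (fun b => take m b == u) (undup B) in
      let l := \max_(u <- P) cnt u in
      flatten [seq [seq rcons s i.-1 | s <- Find m [seq u <- P | i <= cnt u]]
              | i <- iota 1 l]
  end.

(* The square matrix T_{A,B} (rows indexed by A, columns by B, in list order),
   of size |B| x |B|; used together with size A = size B. *)
Definition Tsub (F : nzRingType) (A B : seq (seq nat)) : 'M[F]_(size B) :=
  \matrix_(i < size B, j < size B) ((binomv (nth [::] A i) (nth [::] B j))%:R)%R.

From HB Require Import structures.
From mathcomp Require Import all_boot all_order all_algebra.
From mathcomp Require Import ring zify.
Set Implicit Arguments. Unset Strict Implicit. Unset Printing Implicit Defensive.
Import GRing.Theory.
Local Open Scope ring_scope.

(* Group B into fibers over the prefixes u = pi_n(b) and let
   h_j(u) = sum_t c(u,t) 'C(t, j) be the binomial moments of a coefficient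
   vector c on the fiber over u; the entry of T_{A,B} c at a row rcons s j is
   sum_u binomv s u * h_j(u).  If T_{A,B} c = 0, induction on j shows that h_j
   vanishes on every prefix whose fiber has more than j points: prefixes with
   smaller fibers are already zero by the one-dimensional case, and the others
   form F_(j+1), on which the rows rcons s j with s in Find(F_(j+1)) are
   independent by induction on n.  The one-dimensional case is the
   nonsingularity of ('C(t, j)) for distinct t, proved by multiplying c by
   (t - s), which needs characteristic 0. *)

Lemma mul_bin_shift (t j : nat) :
  (t * 'C(t, j) = j.+1 * 'C(t, j.+1) + j * 'C(t, j))%N.
Proof.
rewrite mul_bin_left; case: (leqP j t) => [le_jt | lt_tj].
  by rewrite -mulnDl subnK.
by rewrite bin_small // !muln0.
Qed.

Lemma sum_bin_shift (R : comNzRingType) (ts : seq nat) (c : nat -> R) (s j : nat) :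
  \sum_(t <- ts) c t * (t%:R - s%:R) * 'C(t, j)%:R =
  j.+1%:R * \sum_(t <- ts) c t * 'C(t, j.+1)%:R
    + (j%:R - s%:R) * \sum_(t <- ts) c t * 'C(t, j)%:R.
Proof.
rewrite !mulr_sumr -big_split /=; apply: eq_bigr => t _.
have shift : t%:R * 'C(t, j)%:R = j.+1%:R * 'C(t, j.+1)%:R + j%:R * 'C(t, j)%:R :> R.
  by rewrite -!natrM -natrD mul_bin_shift.
transitivity (c t * (t%:R * 'C(t, j)%:R) - c t * s%:R * 'C(t, j)%:R); first by ring.
by rewrite shift; ring.
Qed.

Section CharZero.
Variables (F : fieldType) (charF0 : [pchar F] =i pred0).

Lemma pchar0_eqr_nat (m n : nat) : (m%:R == n%:R :> F) = (m == n).
Proof.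
wlog le_mn : m n / (m <= n)%N.
  by move=> W; case/orP: (leq_total m n) => /W; rewrite // eq_sym [(n == m)]eq_sym.
rewrite eq_sym -subr_eq0 -natrB // ((pcharf0P F).1 charF0) subn_eq0.
by rewrite eqn_leq le_mn.
Qed.

Lemma binomial_vandermonde (ts : seq nat) (c : nat -> F) :
  uniq ts ->
  (forall j, (j < size ts)%N -> \sum_(t <- ts) c t * 'C(t, j)%:R = 0) ->
  {in ts, forall t, c t = 0}.
Proof.
elim: ts c => [|s ts IH] c //= /andP[s_ts ts_uniq] moments_eq0.
have cs_eq0 t : t \in ts -> c t * (t%:R - s%:R) = 0.
  apply: (IH (fun t => c t * (t%:R - s%:R))) => // j lt_j_ts.
  have := sum_bin_shift (s :: ts) c s j.
  rewrite big_cons subrr mulr0 mul0r add0r => ->.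
  by rewrite !moments_eq0 ?mulr0 ?addr0 //= ltnW.
have ct_eq0 t : t \in ts -> c t = 0.
  move=> t_ts; apply/eqP; have /eqP := cs_eq0 t t_ts.
  rewrite mulf_eq0 subr_eq0 pchar0_eqr_nat => /orP[// | /eqP ts_eq].
  by move: s_ts; rewrite -ts_eq t_ts.
move=> t; rewrite inE => /orP[/eqP -> | /ct_eq0 //].
have := moments_eq0 0%N isT; rewrite big_cons bin0 mulr1 big_seq big1 ?addr0 //.
by move=> t' /ct_eq0 ->; rewrite mul0r.
Qed.

End CharZero.

Lemma partition_big_undup (R : Type) (idx : R) (op : Monoid.com_law idx)
    (I J : eqType) (f : I -> J) (r : seq I) (G : I -> R) :
  \big[op/idx]_(i <- r) G i =
  \big[op/idx]_(j <- undup (map f r)) \big[op/idx]_(i <- r | f i == j) G i.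
Proof.
under [RHS]eq_bigr do rewrite big_mkcond.
rewrite exchange_big /=; apply: eq_big_seq => i i_r.
have fi_r : f i \in undup (map f r) by rewrite mem_undup map_f.
rewrite (bigD1_seq (f i)) ?undup_uniq //= eqxx big1 ?Monoid.mulm1 // => j.
by rewrite eq_sym => /negbTE ->.
Qed.

Lemma rcons_take_nth (k : nat) (b : seq nat) :
  size b = k.+1 -> b = rcons (take k b) (nth 0%N b k).
Proof. by move=> size_b; rewrite -take_nth ?size_b // -size_b take_size. Qed.

Lemma binomv_rcons (s u : seq nat) (j t : nat) :
  size s = size u -> binomv (rcons s j) (rcons u t) = (binomv s u * 'C(t, j))%N.
Proof. by move=> eq_size; rewrite /binomv zip_rcons // big_rcons. Qed.

Lemma count_iota1_leq (c l : nat) :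
  (c <= l)%N -> count (fun i => i <= c)%N (iota 1 l) = c.
Proof.
move=> le_cl; rewrite -(subnKC le_cl) iotaD count_cat.
rewrite (@eq_in_count _ _ predT) ?count_predT ?size_iota; last first.
  by move=> i; rewrite mem_iota add1n ltnS => /andP[].
rewrite (@eq_in_count _ _ pred0) ?count_pred0 ?addn0 // => i.
by rewrite mem_iota add1n => /andP[lt_ci _]; apply/negbTE; rewrite -ltnNge.
Qed.

Lemma Find_nil (n : nat) : Find n [::] = [::].
Proof. by case: n => [|[|n]] //=; rewrite big_nil. Qed.

Definition Tcols_free (F : fieldType) (A B : seq (seq nat)) :=
  forall c : seq nat -> F,
    (forall a, a \in A -> \sum_(b <- B) c b * (binomv a b)%:R = 0) ->
    {in B, forall b, c b = 0}.

Lemma det_Tsub_neq0 (F : fieldType) (A B : seq (seq nat)) :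
  uniq B -> size A = size B -> Tcols_free F A B -> \det (Tsub F A B) != 0.
Proof.
move=> B_uniq size_A free_AB; apply/negP; rewrite -det_tr => /det0P[v v_neq0 vT_eq0].
pose c b := \sum_(i < size B | nth [::] B i == b) v 0 i.
have cE (i : 'I_(size B)) : c (nth [::] B i) = v 0 i.
  rewrite /c (eq_bigl (pred1 i)) ?big_pred1_eq // => j /=.
  by rewrite nth_uniq.
move/negP: v_neq0; apply; apply/eqP/rowP => i; rewrite mxE -cE.
apply: free_AB; last exact: mem_nth.
move=> a /(nthP [::])[j lt_jA <-].
have lt_jB : (j < size B)%N by rewrite -size_A.
have := congr1 (fun w : 'rV[F]_(size B) => w 0 (Ordinal lt_jB)) vT_eq0.
rewrite !mxE => vj_eq0; rewrite -[RHS]vj_eq0 (big_nth [::]) big_mkord.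
by apply: eq_bigr => i' _; rewrite cE !mxE.
Qed.

Definition Find_spec (F : fieldType) (n : nat) :=
  forall d (B : seq (seq nat)), uniq B -> all (inM n d) B ->
  [/\ all (inM n d) (Find n B), uniq (Find n B), size (Find n B) = size B
    & Tcols_free F (Find n B) B].

Lemma Find1_spec (F : fieldType) : [pchar F] =i pred0 -> Find_spec F 1.
Proof.
move=> charF0 d B B_uniq B_sub; rewrite /= undup_id //.
have B_single b : b \in B -> b = [:: head 0%N b].
  by move=> /(allP B_sub)/andP[/eqP]; case: b => [|x []].
pose ts := map (head 0%N) B.
have ts_uniq : uniq ts.
  rewrite map_inj_in_uniq // => b1 b2 b1_B b2_B eq_head.
  by rewrite (B_single _ b1_B) (B_single _ b2_B) eq_head.
have ts_le_d t : t \in ts -> (t <= d)%N.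
  move=> /mapP[b b_B ->]; have /andP[_] := allP B_sub b b_B.
  by rewrite {1}(B_single _ b_B) /= addn0.
have size_B : (size B <= d.+1)%N.
  rewrite -(size_map (head 0%N) B) -(size_iota 0 d.+1).
  by apply: uniq_leq_size ts_uniq _ => t /ts_le_d; rewrite mem_iota.
split.
- apply/allP => a /mapP[i]; rewrite mem_iota => /andP[_ lt_iB] ->.
  rewrite /inM /= addn0; lia.
- by rewrite map_inj_uniq ?iota_uniq // => x y [].
- by rewrite size_map size_iota.
move=> c Tc_eq0 b b_B; rewrite (B_single _ b_B).
apply: (binomial_vandermonde charF0 (c := fun t => c [:: t]) ts_uniq); last exact: map_f.
move=> j; rewrite size_map => lt_jB.
rewrite -[RHS](Tc_eq0 [:: j]); last by apply: map_f; rewrite mem_iota.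
rewrite big_map; apply: eq_big_seq => b' b'_B.
by rewrite [in RHS](B_single _ b'_B) /binomv /= big_seq1.
Qed.

Section FindStep.
Variables (F : fieldType) (k d : nat) (B : seq (seq nat)).
Hypotheses (charF0 : [pchar F] =i pred0) (Find_k : Find_spec F k).
Hypotheses (B_uniq : uniq B) (B_sub : all (inM k.+1 d) B).

Let prefixes := undup [seq take k b | b <- B].
Let mult u := count (fun b => take k b == u) B.
Let ell := (\max_(u <- prefixes) mult u)%N.
Let Fi i := [seq u <- prefixes | (i <= mult u)%N].
Let A := [seq rcons s i.-1 | i <- iota 1 ell, s <- Find k (Fi i)].
Let fiber u := [seq nth 0%N b k | b <- B & take k b == u].

Lemma B_rcons b : b \in B -> b = rcons (take k b) (nth 0%N b k).
Proof. by move=> /(allP B_sub)/andP[/eqP/rcons_take_nth]. Qed.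

Lemma size_B_prefix b : b \in B -> size (take k b) = k.
Proof. by move=> /(allP B_sub)/andP[/eqP size_b _]; rewrite size_takel ?size_b. Qed.

Lemma fiber_uniq u : uniq (fiber u).
Proof.
rewrite map_inj_in_uniq ?filter_uniq // => b1 b2.
rewrite !mem_filter => /andP[/eqP eq1 b1_B] /andP[/eqP eq2 b2_B] eq_last.
by rewrite (B_rcons b1_B) (B_rcons b2_B) eq1 eq2 eq_last.
Qed.

Lemma size_fiber u : size (fiber u) = mult u.
Proof. by rewrite size_map size_filter. Qed.

Lemma rcons_fiber u t : t \in fiber u -> rcons u t \in B.
Proof.
by move=> /mapP[b]; rewrite mem_filter => /andP[/eqP <- b_B] ->; rewrite -B_rcons.
Qed.

Lemma mult_le_ell u : u \in prefixes -> (mult u <= ell)%N.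
Proof. by move=> u_prefixes; apply: leq_bigmax_seq. Qed.

Lemma fiber_has_geq u i :
  (0 < i <= mult u)%N -> exists2 t, t \in fiber u & (i.-1 <= t)%N.
Proof.
move=> /andP[i_gt0 le_i_mult].
have [/hasP[t] | /hasPn fiber_lt] := boolP (has (fun t => i.-1 <= t)%N (fiber u)).
  by exists t.
have : (size (fiber u) <= size (iota 0 i.-1))%N.
  apply: uniq_leq_size (fiber_uniq u) _ => t /fiber_lt.
  by rewrite mem_iota -ltnNge.
rewrite size_iota size_fiber; lia.
Qed.

Lemma Fi_bound i u :
  (0 < i)%N -> u \in Fi i -> size u = k /\ (sumn u + i.-1 <= d)%N.
Proof.
move=> i_gt0; rewrite mem_filter mem_undup => /andP[le_i_mult /mapP[b b_B u_eq]].
subst u; split; first exact: size_B_prefix.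
have [t t_fiber le_it] : exists2 t, t \in fiber (take k b) & (i.-1 <= t)%N.
  by apply: fiber_has_geq; rewrite i_gt0.
have /andP[_] := allP B_sub _ (rcons_fiber t_fiber).
by rewrite sumn_rcons; apply: leq_trans; rewrite leq_add2l.
Qed.

Lemma Find_Fi i : (0 < i)%N ->
  [/\ all (inM k (d - i.-1)) (Find k (Fi i)), uniq (Find k (Fi i)),
      size (Find k (Fi i)) = size (Fi i) & Tcols_free F (Find k (Fi i)) (Fi i)].
Proof.
move=> i_gt0; apply: Find_k; first by rewrite filter_uniq ?undup_uniq.
apply/allP => u u_Fi; have [size_u sum_u] := Fi_bound i_gt0 u_Fi.
rewrite /inM size_u eqxx /=; lia.
Qed.

Lemma A_inM : all (inM k.+1 d) A.
Proof.
apply/allP => _ /allpairsPdep[i [s [i_iota s_Find ->]]].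
have i_gt0 : (0 < i)%N by move: i_iota; rewrite mem_iota => /andP[].
have [/allP Find_inM _ _ _] := Find_Fi i_gt0.
have /andP[/eqP size_s sum_s] := Find_inM s s_Find.
have [u u_Fi] : exists u, u \in Fi i.
  by case Fi_eq: (Fi i) s_Find => [|u r]; [rewrite Find_nil | exists u; rewrite mem_head].
have [_ /(leq_trans (leq_addl _ _)) le_i_d] := Fi_bound i_gt0 u_Fi.
rewrite /inM size_rcons size_s eqxx sumn_rcons addnC -leq_subRL //.
Qed.

Lemma A_uniq : uniq A.
Proof.
apply: allpairs_uniq_dep => [|i|[i s] [i' s']]; first exact: iota_uniq.
  by rewrite mem_iota => /andP[i_gt0 _]; have [] := Find_Fi i_gt0.
move=> /allpairsPdep[j [y [j_iota _ /(congr1 tag) /= ->]]].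
move=> /allpairsPdep[j' [y' [j'_iota _ /(congr1 tag) /= ->]]] /=.
move: j_iota j'_iota; rewrite !mem_iota => /andP[j_gt0 _] /andP[j'_gt0 _].
by move=> /rcons_inj[-> /(congr1 S)]; rewrite !prednK // => ->.
Qed.

Lemma size_A : size A = size B.
Proof.
rewrite size_allpairs_dep sumnE big_map.
under eq_big_seq => i i_iota.
  have i_gt0 : (0 < i)%N by move: i_iota; rewrite mem_iota => /andP[].
  have [_ _ -> _] := Find_Fi i_gt0.
  rewrite size_filter -sum1_count big_mkcond.
over.
rewrite exchange_big -sum1_size [RHS](partition_big_undup _ (fun b => take k b)).
apply: eq_big_seq => u u_prefixes.
by rewrite -big_mkcond sum1_count count_iota1_leq ?mult_le_ell // sum1_count.
Qed.

Section Moments.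
Variable c : seq nat -> F.

Let moment j u := \sum_(b <- B | take k b == u) c b * 'C(nth 0%N b k, j)%:R.

Lemma sum_T_rcons s j : size s = k ->
  \sum_(b <- B) c b * (binomv (rcons s j) b)%:R =
  \sum_(u <- prefixes) moment j u * (binomv s u)%:R.
Proof.
move=> size_s; rewrite (partition_big_undup _ (fun b => take k b)).
apply: eq_bigr => u _; rewrite /moment mulr_suml big_seq_cond [RHS]big_seq_cond.
apply: eq_bigr => b /andP[b_B /eqP <-].
rewrite [X in binomv _ X](B_rcons b_B) binomv_rcons ?natrM; first by ring.
by rewrite size_s size_B_prefix.
Qed.

Lemma fiber_eq0 u : (forall j, (j < mult u)%N -> moment j u = 0) ->
  {in B, forall b, take k b = u -> c b = 0}.
Proof.
move=> moments_eq0 b b_B prefix_b.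
have vanish := binomial_vandermonde charF0 (c := fun t => c (rcons u t)) (fiber_uniq u).
rewrite (B_rcons b_B) prefix_b; apply: vanish; last first.
  by apply/mapP; exists b; rewrite // mem_filter prefix_b eqxx.
move=> j; rewrite size_fiber => lt_j_mult; rewrite -[RHS](moments_eq0 j lt_j_mult).
rewrite big_map big_filter big_seq_cond [RHS]big_seq_cond.
by apply: eq_bigr => b' /andP[b'_B /eqP <-]; rewrite -B_rcons.
Qed.

Hypothesis Tc_eq0 : forall a, a \in A -> \sum_(b <- B) c b * (binomv a b)%:R = 0.

Lemma moment_eq0 j : (j < ell)%N -> {in prefixes, forall u, moment j u = 0}.
Proof.
elim/ltn_ind: j => j IHj lt_j_ell u u_prefixes.
have small_eq0 u' : u' \in prefixes -> (mult u' <= j)%N -> moment j u' = 0.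
  move=> u'_prefixes le_mult_j; rewrite /moment big_seq_cond big1 // => b.
  move=> /andP[b_B /eqP prefix_b]; rewrite (@fiber_eq0 u') ?mul0r // => j' lt_j'_mult.
  by apply: IHj => //; lia.
have [le_mult_j | lt_j_mult] := leqP (mult u) j; first exact: small_eq0.
have u_Fi : u \in Fi j.+1 by rewrite mem_filter lt_j_mult u_prefixes.
have [Find_inM _ _ Find_free] := Find_Fi (ltn0Sn j).
apply: (Find_free (moment j)) => // s s_Find.
have /andP[/eqP size_s _] := allP Find_inM s s_Find.
have s_A : rcons s j \in A.
  by apply/allpairsPdep; exists j.+1, s; rewrite mem_iota /= add1n ltnS lt_j_ell.
rewrite -[RHS](Tc_eq0 s_A) sum_T_rcons // big_filter big_mkcond.
apply: eq_big_seq => u' u'_prefixes.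
by have [// | le_mult_j] := ltnP j (mult u'); rewrite small_eq0 ?mul0r.
Qed.

Lemma B_coef_eq0 : {in B, forall b, c b = 0}.
Proof.
move=> b b_B; apply: (@fiber_eq0 (take k b)) => // j lt_j_mult.
have prefix_b : take k b \in prefixes by rewrite mem_undup map_f.
by apply: moment_eq0 => //; apply: leq_trans lt_j_mult (mult_le_ell prefix_b).
Qed.

End Moments.

End FindStep.

Lemma Find_spec_succ (F : fieldType) (k : nat) :
  [pchar F] =i pred0 -> Find_spec F k.+1 -> Find_spec F k.+2.
Proof.
move=> charF0 Find_k d B B_uniq B_sub; rewrite [Find _ B]/= undup_id //.
split.
- exact: (A_inM Find_k B_uniq B_sub).
- exact: (A_uniq Find_k B_uniq B_sub).
- exact: (size_A Find_k B_uniq B_sub).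
- exact: (B_coef_eq0 charF0 Find_k B_uniq B_sub).
Qed.

Lemma Find_correct (F : fieldType) (n : nat) :
  [pchar F] =i pred0 -> (0 < n)%N -> Find_spec F n.
Proof.
move=> charF0; case: n => [// | k] _.
elim: k => [|k IHk]; first exact: Find1_spec.
exact: Find_spec_succ.
Qed.

Unset Implicit Arguments.
Local Close Scope ring_scope.

Theorem lemma4p6 (F : fieldType) (charF0 : [pchar F]%R =i pred0)
  (n d : nat) (n_ge1 : (1 <= n)%N) (B : seq (seq nat))
  (B_uniq : uniq B) (B_ne : B != [::]) (B_sub : all (inM n d) B) :
  let A := Find n B in
  [/\ all (inM n d) A, uniq A, size A = size B & (\det (Tsub F A B) != 0)%R].
Proof.
move=> A; have [A_inM A_uniq size_A A_free] := Find_correct charF0 n_ge1 B_uniq B_sub.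
by split=> //; apply: det_Tsub_neq0.
Qed.
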